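(* There exists a setting (with pairwise distinct budgets) in which the budget-oblivious second-price auction (BOSP) has no pure Nash equilibrium.
   Context: Setting: there are $k\ge 1$ slots with public click-through rates $\theta_1>\theta_2>\dots>\theta_k>0$, and $n\ge k$ players. Player $i$ has a private value per click $v_i\ge 0$ and a budget $B_i>0$; the budgets $B_1,\dots,B_n$ are pairwise distinct. A setting consists of $k,n,(\theta_j),(v_i),(B_i)$ together with a fixed strict priority order on the players used to break all ties. Each player $i$ submits a value-bid $b_i\ge 0$ and a budget-bid $g_i\ge 0$; a mechanism outputs an injective partial slot assignment (assigned player $i$ gets slot $s(i)\in\{1,\dots,k\}$) and a price per click $p(i)\ge0$ for each assigned player; unassigned players pay nothing. The utility of player $i$ is $u_i=0$ if $i$ is unassigned, $u_i=\theta_{s(i)}(v_i-p(i))$ if $i$ is assigned and $\theta_{s(i)}p(i)\le B_i$, and $u_i=-\infty$ if $i$ is assigned and $\theta_{s(i)}p(i)>B_i$. A (pure) Nash equilibrium is a profile $(b_i,g_i)_{i}$ such that no player $i$ can strictly increase $u_i$ by unilaterally replacing $(b_i,g_i)$ with any other pair. BOSP: order the players by decreasing value-bid (ties broken by the priority order); for $j\le k$ the $j$-th player in this order gets slot $j$ and pays per click the value-bid of the $(j+1)$-th player in the order (0 if there is none); the remaining players are unassigned. Budget-bids are ignored. *)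

From Stdlib Require Import Reals List Arith Bool.
Import ListNotations.
Open Scope R_scope.

(* Players are 0, ..., n-1; slots are 1, ..., k; theta j is the CTR of slot j.
   The priority order is given by an injective rank function pr on players:
   player j has priority over player i iff (pr j < pr i)%nat. *)

Inductive util := NegInf | Fin (r : R).

Definition util_lt (x y : util) : Prop :=
  match x, y with
  | NegInf, Fin _ => True
  | Fin a, Fin b => a < b
  | _, _ => False
  end.

Definition beats (pr : nat -> nat) (b : nat -> R) (j i : nat) : bool :=
  if Rlt_dec (b i) (b j) then true
  else if Req_EM_T (b j) (b i) then Nat.ltb (pr j) (pr i) else false.

(* 0-based position of player i in the BOSP order *)
Definition pos (n : nat) (pr : nat -> nat) (b : nat -> R) (i : nat) : nat :=
  length (filter (fun j => andb (negb (Nat.eqb j i)) (beats pr b j i)) (seq 0 n)).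

(* price per click: value-bid of the next player in the order (0 if none) *)
Definition bosp_price (n : nat) (pr : nat -> nat) (b : nat -> R) (i : nat) : R :=
  fold_right Rplus 0
    (map (fun j => if Nat.eqb (pos n pr b j) (S (pos n pr b i)) then b j else 0)
         (seq 0 n)).

(* utility of player i under BOSP; player i gets slot (pos i + 1) if pos i < k.
   Budget-bids g are ignored by BOSP. *)
Definition bosp_util (k n : nat) (theta : nat -> R) (pr : nat -> nat)
    (v B : nat -> R) (b g : nat -> R) (i : nat) : util :=
  if Nat.ltb (pos n pr b i) k then
    let s := S (pos n pr b i) in
    let p := bosp_price n pr b i in
    if Rle_dec (theta s * p) (B i) then Fin (theta s * (v i - p)) else NegInf
  else Fin 0.

Definition upd (f : nat -> R) (i : nat) (x : R) : nat -> R :=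
  fun j => if Nat.eqb j i then x else f j.

Definition bosp_NE (k n : nat) (theta : nat -> R) (pr : nat -> nat)
    (v B : nat -> R) (b g : nat -> R) : Prop :=
  forall i b' g', (i < n)%nat -> 0 <= b' -> 0 <= g' ->
    ~ util_lt (bosp_util k n theta pr v B b g i)
              (bosp_util k n theta pr v B (upd b i b') (upd g i g') i).

From Pilot Require Import Defs.
From Stdlib Require Import Reals List Arith Bool.
From Stdlib Require Import Lra Lia.
Open Scope R_scope.

(* Setting: k = 2 slots with click-through rates 2 and 1, n = 3 players, all
   valuing a click at 10, with budgets 1 < 11/10 < 6/5 in decreasing order of
   priority.  Rank the players of a profile as x1 > x2 > x3 in the BOSP order.
   (1) Bidding 0 never violates a budget, so in an equilibrium every player
       is within budget; for x1 this gives 2 * b(x2) <= B(x1) <= 6/5.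
   (2) If b(x2) < b(x1), the unassigned x3 bids strictly between them, takes
       slot 2 at the affordable price b(x2) <= 3/5, and gains.
   (3) If b(x2) = b(x1), then x1 won the tie by priority, so B(x1) < B(x2);
       x2 outbids x1, takes slot 1 at the price b(x1) it can afford, and
       gains since 2 (10 - b(x1)) > 10 >= its current utility. *)

Ltac decide_bids :=
  repeat match goal with
  | |- context [Rlt_dec ?x ?y] => destruct (Rlt_dec x y)
  | |- context [Req_EM_T ?x ?y] => destruct (Req_EM_T x y)
  | H : context [Rlt_dec ?x ?y] |- _ => destruct (Rlt_dec x y)
  | H : context [Req_EM_T ?x ?y] |- _ => destruct (Req_EM_T x y)
  end;
  rewrite ?Nat.ltb_lt, ?Nat.ltb_ge in *;
  try discriminate; try lra; try lia.

Section BospOrder.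
Variables (pr : nat -> nat) (b : nat -> R).

Lemma beats_irrefl (i : nat) : beats pr b i i = false.
Proof. unfold beats; decide_bids. Qed.

Lemma beats_asym (i j : nat) : beats pr b j i = true -> beats pr b i j = false.
Proof. unfold beats; intros; decide_bids. Qed.

Lemma beats_trans (i j l : nat) :
  beats pr b j i = true -> beats pr b i l = true -> beats pr b j l = true.
Proof. unfold beats; intros; decide_bids. Qed.

Lemma beats_total (i j : nat) :
  pr i <> pr j -> beats pr b i j = true \/ beats pr b j i = true.
Proof. unfold beats; intros; decide_bids. Qed.

Lemma beats_of_lt (i j : nat) : b i < b j -> beats pr b j i = true.
Proof. unfold beats; intros; decide_bids. Qed.

Lemma beats_le (i j : nat) : beats pr b j i = true -> b i <= b j.
Proof. unfold beats; intros; decide_bids. Qed.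

Lemma beats_tie (i j : nat) :
  beats pr b j i = true -> b j = b i -> (pr j < pr i)%nat.
Proof. unfold beats; intros; decide_bids. Qed.

Lemma beats_upd_other (i j l : nat) (x : R) :
  j <> i -> l <> i -> beats pr (upd b i x) j l = beats pr b j l.
Proof.
  intros hj hl; unfold beats, upd.
  apply Nat.eqb_neq in hj, hl; rewrite hj, hl; reflexivity.
Qed.

End BospOrder.

Lemma upd_same (b : nat -> R) (i : nat) (x : R) : upd b i x i = x.
Proof. unfold upd; rewrite Nat.eqb_refl; reflexivity. Qed.

Lemma upd_other (b : nat -> R) (i j : nat) (x : R) : j <> i -> upd b i x j = b j.
Proof. unfold upd; intros h; apply Nat.eqb_neq in h; rewrite h; reflexivity. Qed.

Lemma filter_length_mono {A : Type} (p q : A -> bool) (l : list A) :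
  (forall x, In x l -> p x = true -> q x = true) ->
  (length (filter p l) <= length (filter q l))%nat.
Proof.
  induction l as [|a l IH]; intros hpq; simpl; [lia|].
  assert (IH' : (length (filter p l) <= length (filter q l))%nat)
    by (apply IH; intros x hx; apply hpq; now right).
  destruct (p a) eqn:hpa.
  - rewrite (hpq a (or_introl eq_refl) hpa); simpl; lia.
  - destruct (q a); simpl; lia.
Qed.

Lemma filter_length_mono_strict {A : Type} (p q : A -> bool) (l : list A) (y : A) :
  (forall x, In x l -> p x = true -> q x = true) ->
  In y l -> p y = false -> q y = true ->
  (length (filter p l) < length (filter q l))%nat.
Proof.
  induction l as [|a l IH]; intros hpq hy hpy hqy; [destruct hy|].
  assert (hle : (length (filter p l) <= length (filter q l))%nat)
    by (apply filter_length_mono; intros x hx; apply hpq; now right).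
  simpl; destruct hy as [<- | hy].
  - rewrite hpy, hqy; simpl; lia.
  - assert (hlt : (length (filter p l) < length (filter q l))%nat)
      by (apply IH; auto; intros x hx; apply hpq; now right).
    destruct (p a) eqn:hpa.
    + rewrite (hpq a (or_introl eq_refl) hpa); simpl; lia.
    + destruct (q a); simpl; lia.
Qed.

Lemma pos_lt_of_beats (n : nat) (pr : nat -> nat) (b : nat -> R) (i j : nat) :
  (j < n)%nat -> beats pr b j i = true -> (Defs.pos n pr b j < Defs.pos n pr b i)%nat.
Proof.
  intros hj hji; unfold Defs.pos.
  apply filter_length_mono_strict with (y := j).
  - intros l _ hl; apply andb_prop in hl as [hlj hlbj].
    apply andb_true_intro; split.
    + apply negb_true_iff, Nat.eqb_neq; intros ->.
      rewrite (beats_asym pr b i j hji) in hlbj; discriminate.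
    + exact (beats_trans pr b j l i hlbj hji).
  - apply in_seq; lia.
  - rewrite Nat.eqb_refl; reflexivity.
  - apply andb_true_intro; split; [|exact hji].
    apply negb_true_iff, Nat.eqb_neq; intros ->.
    rewrite beats_irrefl in hji; discriminate.
Qed.

(* A player bidding 0 pays 0: nobody ranked after it bids more than 0. *)
Lemma bosp_price_zero_bid (n : nat) (pr : nat -> nat) (b : nat -> R) (i : nat) :
  (forall j, (j < n)%nat -> 0 <= b j) -> b i = 0 -> bosp_price n pr b i = 0.
Proof.
  intros hb hbi; unfold bosp_price.
  assert (hterm : forall j, In j (seq 0 n) ->
            (if Nat.eqb (Defs.pos n pr b j) (S (Defs.pos n pr b i)) then b j else 0) = 0).
  { intros j hj; apply in_seq in hj.
    destruct (Nat.eqb_spec (Defs.pos n pr b j) (S (Defs.pos n pr b i))) as [hpos|]; [|reflexivity].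
    destruct (Rle_lt_or_eq_dec 0 (b j) (hb j ltac:(lia))) as [hpos_bid|]; [|auto].
    assert (hlt := pos_lt_of_beats n pr b i j ltac:(lia) (beats_of_lt pr b i j ltac:(lra))).
    lia. }
  induction (seq 0 n) as [|a l IH]; simpl; [reflexivity|].
  rewrite (hterm a (or_introl eq_refl)), IH; [ring|].
  intros j hj; apply hterm; now right.
Qed.

Lemma bosp_util_zero_bid (k n : nat) (theta : nat -> R) (pr : nat -> nat)
    (v B b g : nat -> R) (i : nat) :
  (forall j, (j < n)%nat -> 0 <= b j) -> 0 <= B i -> b i = 0 ->
  bosp_util k n theta pr v B b g i <> NegInf.
Proof.
  intros hb hB hbi; unfold bosp_util.
  rewrite (bosp_price_zero_bid n pr b i hb hbi), Rmult_0_r.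
  destruct (Nat.ltb _ k); [|discriminate].
  destruct (Rle_dec 0 (B i)); [discriminate | contradiction].
Qed.

Lemma bosp_NE_within_budget (k n : nat) (theta : nat -> R) (pr : nat -> nat)
    (v B b g : nat -> R) (i : nat) :
  bosp_NE k n theta pr v B b g -> (forall j, (j < n)%nat -> 0 <= b j) ->
  (i < n)%nat -> 0 <= B i -> bosp_util k n theta pr v B b g i <> NegInf.
Proof.
  intros hNE hb hi hB hneg.
  assert (hb0 : forall j, (j < n)%nat -> 0 <= upd b i 0 j).
  { intros j hj; unfold upd; destruct (Nat.eqb j i); [lra | auto]. }
  apply (hNE i 0 0 hi (Rle_refl 0) (Rle_refl 0)); rewrite hneg.
  destruct (bosp_util k n theta pr v B (upd b i 0) (upd g i 0) i) eqn:hdev; [|exact I].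
  exact (bosp_util_zero_bid k n theta pr v B _ _ i hb0 hB (upd_same b i 0) hdev).
Qed.

Definition slot_util (theta v B : nat -> R) (s : nat) (p : R) (i : nat) : util :=
  if Rle_dec (theta s * p) (B i) then Fin (theta s * (v i - p)) else NegInf.

Lemma ranking3 (pr : nat -> nat) (b : nat -> R) :
  pr 0%nat <> pr 1%nat -> pr 0%nat <> pr 2%nat -> pr 1%nat <> pr 2%nat ->
  exists x1 x2 x3, (x1 < 3)%nat /\ (x2 < 3)%nat /\ (x3 < 3)%nat /\
    beats pr b x1 x2 = true /\ beats pr b x2 x3 = true /\ beats pr b x1 x3 = true.
Proof.
  intros h01 h02 h12.
  destruct (beats_total pr b 0 1 h01) as [b01|b10];
  destruct (beats_total pr b 0 2 h02) as [b02|b20];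
  destruct (beats_total pr b 1 2 h12) as [b12|b21].
  - exists 0%nat, 1%nat, 2%nat; repeat split; try assumption; lia.
  - exists 0%nat, 2%nat, 1%nat; repeat split; try assumption; lia.
  - pose proof (beats_trans pr b 1 0 2 b01 b12) as b02.
    rewrite (beats_asym pr b 0 2 b20) in b02; discriminate.
  - exists 2%nat, 0%nat, 1%nat; repeat split; try assumption; lia.
  - exists 1%nat, 0%nat, 2%nat; repeat split; try assumption; lia.
  - pose proof (beats_trans pr b 0 1 2 b10 b02) as b12.
    rewrite (beats_asym pr b 1 2 b21) in b12; discriminate.
  - exists 1%nat, 2%nat, 0%nat; repeat split; try assumption; lia.
  - exists 2%nat, 1%nat, 0%nat; repeat split; try assumption; lia.
Qed.

Lemma bosp_util_ranked3 (theta : nat -> R) (pr : nat -> nat) (v B b g : nat -> R)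
    (x1 x2 x3 : nat) :
  (x1 < 3)%nat -> (x2 < 3)%nat -> (x3 < 3)%nat ->
  beats pr b x1 x2 = true -> beats pr b x2 x3 = true -> beats pr b x1 x3 = true ->
  bosp_util 2 3 theta pr v B b g x1 = slot_util theta v B 1 (b x2) x1 /\
  bosp_util 2 3 theta pr v B b g x2 = slot_util theta v B 2 (b x3) x2 /\
  bosp_util 2 3 theta pr v B b g x3 = Fin 0.
Proof.
  intros h1 h2 h3 b12 b23 b13.
  pose proof (beats_asym pr b _ _ b12) as b21.
  pose proof (beats_asym pr b _ _ b23) as b32.
  pose proof (beats_asym pr b _ _ b13) as b31.
  assert (hpos : Defs.pos 3 pr b x1 = 0%nat /\ Defs.pos 3 pr b x2 = 1%nat /\
                 Defs.pos 3 pr b x3 = 2%nat).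
  { destruct x1 as [|[|[|]]], x2 as [|[|[|]]], x3 as [|[|[|]]];
      try lia; rewrite ?beats_irrefl in *; try discriminate;
      unfold Defs.pos; cbn -[beats]; rewrite ?b12, ?b23, ?b13, ?b21, ?b32, ?b31;
      repeat split. }
  destruct hpos as (p1 & p2 & p3).
  unfold bosp_util, slot_util; rewrite p1, p2, p3; cbn [Nat.ltb Nat.leb].
  assert (hprice : bosp_price 3 pr b x1 = b x2 /\ bosp_price 3 pr b x2 = b x3).
  { unfold bosp_price; rewrite p1, p2.
    destruct x1 as [|[|[|]]], x2 as [|[|[|]]], x3 as [|[|[|]]];
      try lia; rewrite ?beats_irrefl in *; try discriminate;
      cbn [seq map fold_right]; rewrite p1, p2, p3; cbn; split; ring. }
  destruct hprice as [-> ->]; auto.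
Qed.

Definition ctr (j : nat) : R := if Nat.eqb j 1 then 2 else 1.
Definition value (i : nat) : R := 10.
Definition budget (i : nat) : R :=
  match i with 0%nat => 1 | 1%nat => 11/10 | _ => 6/5 end.
Definition priority (i : nat) : nat := i.

Lemma budget_bounds (i : nat) : 1 <= budget i <= 6/5.
Proof. destruct i as [|[|]]; simpl; lra. Qed.

Lemma budget_increasing (i j : nat) : (i < j)%nat -> (j < 3)%nat -> budget i < budget j.
Proof. intros; destruct i as [|[|]], j as [|[|[|]]]; simpl; lra || lia. Qed.

Section RankedEquilibrium.
Variables (b g : nat -> R) (x1 x2 x3 : nat).
Hypothesis hb : forall i, (i < 3)%nat -> 0 <= b i.
Hypothesis hNE : bosp_NE 2 3 ctr priority value budget b g.
Hypotheses (h1 : (x1 < 3)%nat) (h2 : (x2 < 3)%nat) (h3 : (x3 < 3)%nat).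
Hypotheses (b12 : beats priority b x1 x2 = true) (b23 : beats priority b x2 x3 = true)
  (b13 : beats priority b x1 x3 = true).

Lemma ranked_distinct : x1 <> x2 /\ x2 <> x3 /\ x1 <> x3.
Proof.
  repeat split; intros e.
  - pose proof b12 as h; rewrite e, beats_irrefl in h; discriminate.
  - pose proof b23 as h; rewrite e, beats_irrefl in h; discriminate.
  - pose proof b13 as h; rewrite e, beats_irrefl in h; discriminate.
Qed.

Lemma ranked_slot1_affordable : 2 * b x2 <= budget x1.
Proof.
  pose proof (budget_bounds x1).
  pose proof (bosp_NE_within_budget _ _ _ _ _ _ _ _ x1 hNE hb h1 ltac:(lra)) as hfeas.
  destruct (bosp_util_ranked3 ctr priority value budget b g x1 x2 x3 h1 h2 h3 b12 b23 b13)
    as (u1 & _ & _).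
  rewrite u1 in hfeas; unfold slot_util, ctr in hfeas; simpl in hfeas.
  destruct (Rle_dec (2 * b x2) (budget x1)); [assumption | contradiction].
Qed.

(* Step (2): the top two bids are tied, else x3 bids strictly between them
   and takes slot 2 at the affordable price b(x2) <= 3/5. *)
Lemma ranked_top_bids_tied : b x2 = b x1.
Proof.
  destruct ranked_distinct as (n12 & n23 & n13).
  pose proof ranked_slot1_affordable; pose proof (budget_bounds x1).
  pose proof (hb x2 h2); pose proof (budget_bounds x3).
  destruct (Rle_lt_or_eq_dec _ _ (beats_le priority b x2 x1 b12)) as [lt21 | eq21];
    [exfalso | exact eq21].
  set (m := (b x1 + b x2) / 2); set (b' := upd b x3 m).
  assert (e3 : b' x3 = m) by apply upd_same.
  assert (e1 : b' x1 = b x1) by (apply upd_other; auto).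
  assert (e2 : b' x2 = b x2) by (apply upd_other; auto).
  destruct (bosp_util_ranked3 ctr priority value budget b g x1 x2 x3 h1 h2 h3 b12 b23 b13)
    as (_ & _ & u3).
  destruct (bosp_util_ranked3 ctr priority value budget b' (upd g x3 0) x1 x3 x2
              h1 h3 h2) as (_ & u3' & _).
  - apply beats_of_lt; unfold m in *; lra.
  - apply beats_of_lt; unfold m in *; lra.
  - unfold b'; rewrite beats_upd_other; auto.
  - apply (hNE x3 m 0 h3 ltac:(unfold m; lra) (Rle_refl 0)); fold b'.
    rewrite u3, u3', e2; unfold slot_util, ctr, value; simpl.
    destruct (Rle_dec (1 * b x2) (budget x3)); simpl; lra.
Qed.

(* Step (3): x1 won the tie by priority, hence has the smaller budget; x2
   outbids it, takes slot 1 at price b(x1) and gains. *)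
Lemma ranked_equilibrium_absurd : False.
Proof.
  destruct ranked_distinct as (n12 & n23 & n13).
  pose proof ranked_slot1_affordable as hfeas1; pose proof (budget_bounds x1).
  pose proof ranked_top_bids_tied as eq21.
  pose proof (hb x3 h3); pose proof (beats_le priority b x3 x1 b13).
  assert (hprio : (x1 < x2)%nat) by exact (beats_tie priority b x2 x1 b12 (eq_sym eq21)).
  pose proof (budget_increasing x1 x2 hprio h2).
  set (b' := upd b x2 (b x1 + 1)).
  assert (e2 : b' x2 = b x1 + 1) by apply upd_same.
  assert (e1 : b' x1 = b x1) by (apply upd_other; auto).
  assert (e3 : b' x3 = b x3) by (apply upd_other; auto).
  destruct (bosp_util_ranked3 ctr priority value budget b g x1 x2 x3 h1 h2 h3 b12 b23 b13)
    as (_ & u2 & _).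
  destruct (bosp_util_ranked3 ctr priority value budget b' (upd g x2 0) x2 x1 x3
              h2 h1 h3) as (u2' & _ & _).
  - apply beats_of_lt; lra.
  - unfold b'; rewrite beats_upd_other; auto.
  - apply beats_of_lt; lra.
  - apply (hNE x2 (b x1 + 1) 0 h2 ltac:(lra) (Rle_refl 0)); fold b'.
    rewrite u2, u2', e1; unfold slot_util, ctr, value; simpl.
    destruct (Rle_dec (2 * b x1) (budget x2)); [|lra].
    destruct (Rle_dec (1 * b x3) (budget x2)); simpl; lra.
Qed.

End RankedEquilibrium.

Lemma no_bosp_NE (b g : nat -> R) :
  (forall i, (i < 3)%nat -> 0 <= b i) ->
  ~ bosp_NE 2 3 ctr priority value budget b g.
Proof.
  intros hb hNE.
  destruct (ranking3 priority b) as (x1 & x2 & x3 & h1 & h2 & h3 & b12 & b23 & b13);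
    unfold priority; try lia.
  exact (ranked_equilibrium_absurd b g x1 x2 x3 hb hNE h1 h2 h3 b12 b23 b13).
Qed.

Theorem theorem1 :
  exists (k n : nat) (theta : nat -> R) (v B : nat -> R) (pr : nat -> nat),
    (1 <= k)%nat /\ (k <= n)%nat /\
    (forall j, (1 <= j)%nat -> (j < k)%nat -> theta (S j) < theta j) /\
    0 < theta k /\
    (forall i, (i < n)%nat -> 0 <= v i /\ 0 < B i) /\
    (forall i j, (i < n)%nat -> (j < n)%nat -> i <> j -> B i <> B j) /\
    (forall i j, (i < n)%nat -> (j < n)%nat -> pr i = pr j -> i = j) /\
    forall b g : nat -> R,
      (forall i, (i < n)%nat -> 0 <= b i /\ 0 <= g i) ->
      ~ bosp_NE k n theta pr v B b g.
Proof.
  exists 2%nat, 3%nat, ctr, value, budget, priority.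
  split; [lia|]. split; [lia|].
  split. { intros j hj1 hj2; replace j with 1%nat by lia; unfold ctr; simpl; lra. }
  split. { unfold ctr; simpl; lra. }
  split. { intros i _; pose proof (budget_bounds i); unfold value; lra. }
  split.
  { intros i j hi hj hij; destruct (Nat.lt_total i j) as [hlt|[->|hlt]]; [| contradiction |].
    - pose proof (budget_increasing i j hlt hj); lra.
    - pose proof (budget_increasing j i hlt hi); lra. }
  split. { intros i j _ _ e; exact e. }
  intros b g hbg; apply no_bosp_NE; intros i hi; apply (hbg i hi).
Qed.
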